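(* Let $\mathbb{S}=[S_m,S_M]$ with $S_m<S_M$, and let $h$ be a continuously differentiable, monotonically non-decreasing link function (defined on an open interval containing all points at which it is evaluated below) whose range over $\mathbb{S}$ is the compact interval $[h(S_m),h(S_M)]$, with $h(S_M)>h(S_m)$. Fix $w_u$ in the interior of $\mathbb{S}$, a bias $d\in\mathbb{R}$ and a width $\tau>0$, let $\mathbb{S}_u=[w_u-\tau/2,\,w_u+\tau/2]\subset\mathbb{S}$, and let the observed score be $z(w)=w+I_u(w)\,d$, where $I_u(w)=1$ if $w\in\mathbb{S}_u$ and $I_u(w)=0$ otherwise, with $w$ uniformly distributed on $\mathbb{S}$. Suppose the model predicts $\hat z=w+\hat\delta$, where the constant offset $\hat\delta=\hat\delta(\tau,d)$ is optimal for the expected matching loss, i.e. it satisfies $$\int_{S_m}^{S_M}\big[h(w+\hat\delta)-h(z(w))\big]\,dw=0 .$$ Define $\Delta_{\mathrm{BUST}}(w_u)=\lim_{\tau\to0}\frac{1}{\tau}(\hat z-w)=\lim_{\tau\to 0}\hat\delta/\tau$ and $\Delta_{\mathrm{BLUST}}(w_u)=\lim_{\tau\to0,\,d\to0}\frac{1}{d\tau}(\hat z-w)$. Then $$\Delta_{\mathrm{BUST}}(w_u)=\frac{h(w_u+d)-h(w_u)}{h(S_M)-h(S_m)},\qquad \Delta_{\mathrm{BLUST}}(w_u)=\frac{h'(w_u)}{h(S_M)-h(S_m)}.$$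
   Context: A link function $h$ with primitive $H$ (so $H'=h$) defines the scalar matching loss $\mathcal{L}_m(\hat s,s)=H(\hat s)-H(s)-(\hat s-s)h(s)=\int_s^{\hat s}[h(z)-h(s)]\,dz$, whose gradient in $\hat s$ is $h(\hat s)-h(s)$. Links are taken monotonically non-decreasing, so the loss is convex in $\hat s$. In the bias-underspecification model, the model has no feature distinguishing $\mathbb{S}_u$ from the rest of $\mathbb{S}$, so it can only predict the collective score shifted by a single constant offset $\hat\delta$, chosen so that the expected gradient of the matching loss (over $w\sim U(\mathbb{S})$) vanishes. *)

From HB Require Import structures.
From mathcomp Require Import all_boot all_order all_algebra.
From mathcomp Require Import all_classical all_reals all_analysis.
Set Implicit Arguments. Unset Strict Implicit. Unset Printing Implicit Defensive.
Import Order.TTheory GRing.Theory Num.Theory.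
Import numFieldNormedType.Exports.
Local Open Scope classical_set_scope.
Local Open Scope ring_scope.

Section Defs.
Variable R : realType.

Definition Iu (wu tau w : R) : R :=
  if (wu - tau / 2 <= w <= wu + tau / 2) then 1 else 0.

Definition zobs (wu tau d w : R) : R := w + Iu wu tau w * d.

Definition offset_opt (h : R -> R) (Sm SM wu tau d delta : R) : Prop :=
  (\int[lebesgue_measure]_(w in `[Sm, SM]) (h (w + delta) - h (zobs wu tau d w))%:E
     = 0)%E.

(* all points at which h is evaluated in the optimality equation lie in the
   open interval ]a, b[ on which h is defined (C^1 and non-decreasing) *)
Definition evaluated_in (a b Sm SM wu tau d delta : R) : Prop :=
  forall w, Sm <= w <= SM ->
    (a < w + delta < b) /\ (a < zobs wu tau d w < b).

End Defs.

From HB Require Import structures.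
From mathcomp Require Import all_boot all_order all_algebra.
From mathcomp Require Import all_classical all_reals all_analysis.
From mathcomp Require Import ring lra.
Import Order.TTheory GRing.Theory Num.Theory.
Import numFieldNormedType.Exports.
Set Implicit Arguments.
Unset Strict Implicit.
Unset Printing Implicit Defensive.
Local Open Scope classical_set_scope.
Local Open Scope ring_scope.

(* Let G(delta) = int_[Sm, SM] (h(w + delta) - h(w)) dw.  The optimality equation says
   G(delta) = int_[S_u] (h(w + d) - h(w)) dw = tau (h(xi + d) - h(xi)) for some xi in S_u
   (mean value theorem for integrals).  G is non-decreasing since h is, and, being a
   difference of shifted primitives of h, satisfies G(e)/e -> h(SM) - h(Sm) > 0 as e -> 0.
   So G(delta) -> 0 forces delta -> 0, and then delta/s has the limit of
   (G(delta)/s) / (h(SM) - h(Sm)) for any normalisation s.  For s = tau,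
   G(delta)/tau = h(xi + d) - h(xi) -> h(wu + d) - h(wu); for s = d tau, the mean value
   theorem for h gives G(delta)/(d tau) = h'(c) with |c - wu| <= tau + |d|, and h' is
   continuous at wu. *)

Section real_analysis.
Context {R : realType}.
Notation mu := (@lebesgue_measure R).
Implicit Types (f F : R -> R) (l r x : R).

Lemma derivable_continuous f x : derivable f x 1 -> {for x, continuous f}.
Proof. by move/derivable1_diffP/differentiable_continuous. Qed.

Lemma is_derive_derive1 f x : derivable f x 1 -> is_derive x 1 f (derive1 f x).
Proof. by move=> df; rewrite derive1E; exact: derivableP. Qed.

Lemma is_derive_quotient_cvg F x (dF : R) : is_derive x 1 F dF ->
  (fun e => (F (x + e) - F x) / e) @ 0^' --> dF.
Proof.
move=> Fx; have /cvg_ex[l Fl] : derivable F x 1 by exact: ex_derive.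
have <- : derive F x 1 = dF by exact: derive_val.
rewrite /derive (cvg_lim _ Fl) //.
suff -> : (fun e => (F (x + e) - F x) / e) =
    (fun e => e^-1 *: ((F \o shift x) (e *: 1) - F x)) by exact: Fl.
by apply/funext => e; rewrite /= /shift /= scaler1 [x + e]addrC; exact: mulrC.
Qed.

Lemma continuous_itv_integrable f l r : {in `[l, r], continuous f} ->
  mu.-integrable `[l, r] (EFin \o f).
Proof.
move=> cf; apply: continuous_compact_integrable; first exact: segment_compact.
by apply: continuous_in_subspaceT => x /[!inE]; exact: cf.
Qed.

Lemma Rintegral_is_derive f F l r : l < r -> {in `[l, r], continuous f} ->
  {in `[l, r], forall x, is_derive x 1 F (f x)} ->
  \int[mu]_(x in `[l, r]) f x = F r - F l.
Proof.
move=> lr cf dF.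
have dFl : is_derive l 1 F (f l) by apply: dF; rewrite in_itv /= lexx ltW.
have dFr : is_derive r 1 F (f r) by apply: dF; rewrite in_itv /= lexx ltW.
rewrite /Rintegral (@continuous_FTC2 _ f F l r lr) -?EFinB //.
- by apply: continuous_in_subspaceT => x /[!inE]; exact: cf.
- split; last 2 first.
  + exact/cvg_at_right_filter/derivable_continuous/ex_derive.
  + exact/cvg_at_left_filter/derivable_continuous/ex_derive.
  by move=> x /subset_itv_oo_cc /dF dFx; exact: ex_derive.
- by move=> x /subset_itv_oo_cc /dF dFx; rewrite derive1E derive_val.
Qed.

Lemma Rintegral_mean_value f l r : l < r -> {in `[l, r], continuous f} ->
  exists2 c, c \in `]l, r[ & \int[mu]_(x in `[l, r]) f x = (r - l) * f c.
Proof.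
move=> lr cf; pose F x := \int[mu]_(t in `[l, x]) f t.
have intf := continuous_itv_integrable cf.
have dF x : x \in `]l, r[ -> is_derive x 1 F (f x).
  move=> xlr; have [lx xr] : l < x /\ x < r by move: xlr; rewrite in_itv => /andP.
  have [dFx <-] := continuous_FTC1_closed xr intf lx (cf x (subset_itv_oo_cc xlr)).
  exact: is_derive_derive1.
have cF : {within `[l, r], continuous F}.
  exact: parameterized_integral_continuous (ltW lr) intf.
have [c clr FE] := MVT lr dF cF.
exists c => //; rewrite -/(F r) mulrC -FE.
by rewrite /F set_itv1 Rintegral_set1 subr0.
Qed.

Lemma continuous_shift f e x : {for x + e, continuous f} ->
  {for x, continuous (fun w => f (w + e))}.
Proof.
apply: (@continuous_comp _ _ _ (fun w => w + e) f x).
by apply: cvgD; [exact: cvg_id | exact: cvg_cst].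
Qed.

Lemma Rintegral_shift_quotient_cvg f p q l r : p < l -> l < r -> r < q ->
  {in `]p, q[, continuous f} ->
  (fun e => (\int[mu]_(w in `[l, r]) (f (w + e) - f w)) / e) @ 0^' --> f r - f l.
Proof.
move=> pl lr rq cf.
have [p' pp' p'l] : exists2 p', p < p' & p' < l by exists ((p + l) / 2); lra.
have cf' x : p' <= x < q -> {for x, continuous f}.
  by move=> /andP[? ?]; apply: cf; rewrite in_itv /=; apply/andP; split; lra.
pose F x := \int[mu]_(t in `[p', x]) f t.
have dF x : p' < x < q -> is_derive x 1 F (f x).
  move=> /andP[p'x xq]; have xu : x < (x + q) / 2 by lra.
  have intf : mu.-integrable `[p', (x + q) / 2] (EFin \o f).
    apply: continuous_itv_integrable => y; rewrite in_itv /= => /andP[? ?].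
    by apply: cf'; apply/andP; split; lra.
  have cfx : {for x, continuous f} by apply: cf'; apply/andP; split; lra.
  have [dFx <-] := continuous_FTC1_closed xu intf p'x cfx.
  exact: is_derive_derive1.
suff : (fun e => (F (r + e) - F r) / e - (F (l + e) - F l) / e) @ 0^' --> f r - f l.
  apply: cvg_trans; apply: near_eq_cvg; near=> e.
  have [e1 e2] : - (l - p') < e /\ e < q - r.
    have : `|e| < Num.min (l - p') (q - r).
      by near: e; apply: dnbhs0_lt; rewrite lt_min; apply/andP; split; lra.
    by rewrite lt_min !ltr_norml => /andP[/andP[? ?] /andP[? ?]]; split.
  have cG : {in `[l, r], continuous (fun w => f (w + e) - f w)}.
    move=> w; rewrite in_itv /= => /andP[? ?]; apply: continuousB.
      by apply: continuous_shift; apply: cf'; apply/andP; split; lra.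
    by apply: cf'; apply/andP; split; lra.
  have dG : {in `[l, r], forall w : R,
      is_derive w 1 (fun w => F (w + e) - F w) (f (w + e) - f w)}.
    move=> w; rewrite in_itv /= => /andP[? ?].
    have dFe : is_derive (w + e) 1 F (f (w + e)) by apply: dF; apply/andP; split; lra.
    have dFw : is_derive w 1 F (f w) by apply: dF; apply/andP; split; lra.
    have dFe' := is_derive1_comp (g := shift e) dFe (is_derive_shift w 1 e).
    by have := is_deriveB dFe' dFw; rewrite mulr1.
  by rewrite /= (Rintegral_is_derive lr cG dG) -mulrBl; congr (_ / _); ring.
apply: cvgB; apply: is_derive_quotient_cvg; apply: dF; apply/andP; split; lra.
Unshelve. all: by end_near.
Qed.

Lemma mean_value_derive1 f p q x d :
  {in `]p, q[, forall y, derivable f y 1} -> x \in `]p, q[ -> x + d \in `]p, q[ ->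
  exists2 c, `|c - x| <= `|d| & f (x + d) - f x = d * derive1 f c.
Proof.
move=> df; rewrite !in_itv /= => /andP[px xq] /andP[pxd xdq].
have segment_derivable u v : p < u -> v < q ->
    {in `[u, v], forall y, derivable f y 1}.
  move=> pu vq y; rewrite in_itv /= => /andP[? ?].
  by apply: df; rewrite in_itv /=; apply/andP; split; lra.
have is_derive_f u v y : p < u -> v < q -> y \in `]u, v[ ->
    is_derive y 1 f (derive1 f y).
  move=> pu vq /subset_itv_oo_cc /(segment_derivable _ _ pu vq).
  exact: is_derive_derive1.
have [d0|d0] := leP 0 d.
- have xxd : x <= x + d by lra.
  have [c cx E] := MVT_segment xxd (fun y => is_derive_f _ _ y px xdq)
    (derivable_within_continuous (segment_derivable _ _ px xdq)).
  exists c; last by rewrite E mulrC addrAC subrr add0r.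
  move: cx; rewrite in_itv /= (ger0_norm d0) => /andP[? ?].
  by rewrite ler_norml; apply/andP; split; lra.
- have xdx : x + d <= x by lra.
  have [c cx E] := MVT_segment xdx (fun y => is_derive_f _ _ y pxd xq)
    (derivable_within_continuous (segment_derivable _ _ pxd xq)).
  exists c; last by apply: oppr_inj; rewrite opprB E mulrC -mulNr; congr (_ * _); ring.
  move: cx; rewrite in_itv /= (ltr0_norm d0) => /andP[? ?].
  by rewrite ler_norml; apply/andP; split; lra.
Qed.

End real_analysis.

Section ratio_limits.
Context {R : realType} {T : Type} (F : set_system T) {FF : Filter F}.
Implicit Types (J g : R -> R) (x s v rho : T -> R) (l r c L : R).

Lemma cvg_mean_value_point g a rho v : {for a, continuous g} -> rho @ F --> 0 ->
  (\forall t \near F, exists2 u, `|u - a| <= rho t & v t = g u) ->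
  v @ F --> g a.
Proof.
move=> ga rho0 vg; apply/cvgrPdist_lt => eps eps0.
have : \forall u \near a, `|g a - g u| < eps by exact: (cvgrPdist_lt _ _).1 ga eps eps0.
move=> /nbhs_ballP[eta /= eta0 g_eta].
have rho_eta := (cvgrPdist_lt _ _).1 rho0 eta eta0.
near=> t; have [u ua ->] : exists2 u, `|u - a| <= rho t & v t = g u by near: t.
apply: g_eta; rewrite /ball /= distrC (le_lt_trans ua) //.
have : `|0 - rho t| < eta by near: t; exact: rho_eta.
by rewrite sub0r normrN; apply: le_lt_trans; exact: ler_norm.
Unshelve. all: by end_near.
Qed.

Lemma monotone_cvg0 J l r c x : l < 0 -> 0 < r ->
  {in `]l, r[ &, {homo J : u w / u <= w}} -> 0 < c -> (fun e => J e / e) @ 0^' --> c ->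
  (\forall t \near F, x t \in `]l, r[) -> (J \o x) @ F --> 0 -> x @ F --> 0.
Proof.
move=> l0 r0 J_homo c0 Jc x_in Jx0; apply/cvgrPdist_lt => eps eps0.
have Jc_right : (fun e => J e / e) @ 0^'+ --> c by exact: cvg_dnbhs_at_right.
have Jc_left : (fun e => J (- e) / (- e)) @ 0^'+ --> c.
  by move/cvg_at_leftNP: (cvg_dnbhs_at_left Jc); rewrite oppr0.
have [e [e0 e_small Je_pos Je_neg]] : exists e,
    [/\ 0 < e, e < Num.min eps (Num.min r (- l)), 0 < J e / e & 0 < J (- e) / (- e)].
  apply: (filter_ex (F := 0^'+)); near=> e; split.
  - by near: e; exact: nbhs_right_gt.
  - by near: e; apply: nbhs_right_lt; rewrite !lt_min eps0 r0 oppr_gt0 l0.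
  - by near: e; exact: (cvgr_gt _ Jc_right).
  - by near: e; exact: (cvgr_gt _ Jc_left).
move: e_small; rewrite !lt_min => /andP[eps_e /andP[r_e]]; rewrite ltrNr => l_e.
have Je : 0 < J e by move: Je_pos; rewrite pmulr_lgt0 // invr_gt0.
have JNe : J (- e) < 0 by move: Je_neg; rewrite nmulr_lgt0 ?invr_lt0 ?oppr_lt0 // oppr_lt0.
pose m := Num.min (J e) (- J (- e)).
have m0 : 0 < m by rewrite lt_min Je oppr_gt0 JNe.
have [m_Je m_JNe] : m <= J e /\ m <= - J (- e) by rewrite !ge_min !lexx ?orbT.
have ein : e \in `]l, r[ by rewrite in_itv /=; apply/andP; split; lra.
have Nein : - e \in `]l, r[ by rewrite in_itv /=; apply/andP; split; lra.
have Jx_m := (cvgrPdist_lt _ _).1 Jx0 m m0.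
near=> t; have xt_in : x t \in `]l, r[ by near: t.
have : `|0 - J (x t)| < m by near: t; exact: Jx_m.
rewrite sub0r normrN ltr_norml => /andP[Jx1 Jx2].
rewrite sub0r normrN; apply: (lt_trans _ eps_e); rewrite ltr_norml; apply/andP; split.
- by rewrite ltNge; apply/negP => xe; have /= := J_homo _ _ xt_in Nein xe; lra.
- by rewrite ltNge; apply/negP => ex; have /= := J_homo _ _ ein xt_in ex; lra.
Unshelve. all: by end_near.
Qed.

Lemma cvg_ratio_of_quotient J c L x s : J 0 = 0 -> c != 0 ->
  (fun e => J e / e) @ 0^' --> c -> x @ F --> 0 ->
  (fun t => J (x t) / s t) @ F --> L -> (fun t => x t / s t) @ F --> L / c.
Proof.
move=> J0 c0 Jc x0 JxL.
pose Q e := if e == 0 then c else J e / e.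
have JQ e : J e = Q e * e.
  by rewrite /Q; case: eqP => [->|/eqP e0]; [rewrite J0 mulr0 | rewrite divfK].
have Q0 : {for 0, continuous Q}.
  apply/continuous_withinNx; rewrite {2}/Q eqxx; apply: cvg_trans Jc.
  by apply: near_eq_cvg; near=> e; rewrite /Q ifN //; near: e; exact: nbhs_dnbhs_neq.
have Qx : (Q \o x) @ F --> c.
  have Q0c : Q 0 = c by rewrite /Q eqxx.
  by rewrite -Q0c; exact: cvg_comp x0 Q0.
apply: cvg_trans (cvgM JxL (cvgV c0 Qx)); apply: near_eq_cvg.
near=> t; have Qxt : Q (x t) != 0 by near: t; exact: cvgr_neq0 Qx c0.
by rewrite /= JQ mulrAC [Q (x t) * _]mulrC mulfK.
Unshelve. all: by end_near.
Qed.

End ratio_limits.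

Section bias_underspecification.
Context {R : realType}.
Notation mu := (@lebesgue_measure R).
Variables (a b Sm SM : R) (h : R -> R).
Hypothesis h_C1 :
  forall x, a < x < b -> derivable h x 1 /\ {for x, continuous (derive1 h)}.
Hypothesis h_homo : forall x y, a < x -> x <= y -> y < b -> h x <= h y.
Hypotheses (Sm_SM : Sm < SM) (a_Sm : a < Sm) (SM_b : SM < b) (h_Sm_SM : h Sm < h SM).

Let h_cont x : a < x < b -> {for x, continuous h}.
Proof. by move=> /h_C1[/derivable_continuous]. Qed.

Definition shift_integral (delta : R) :=
  \int[mu]_(w in `[Sm, SM]) (h (w + delta) - h w).

Lemma shift_integral0 : shift_integral 0 = 0.
Proof.
rewrite /shift_integral; under eq_Rintegral do rewrite addr0 subrr.
by rewrite /Rintegral integral0.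
Qed.

Lemma shift_diff_continuous (delta : R) : delta \in `]a - Sm, b - SM[ ->
  {in `[Sm, SM], continuous (fun w => h (w + delta) - h w)}.
Proof.
(* lra ignores section hypotheses, hence they are moved into the context. *)
move: a_Sm SM_b => ? ?; rewrite !in_itv /= => /andP[? ?] w.
rewrite in_itv /= => /andP[? ?].
apply: continuousB; last by apply: h_cont; apply/andP; split; lra.
by apply: continuous_shift; apply: h_cont; apply/andP; split; lra.
Qed.

Lemma shift_integral_homo :
  {in `]a - Sm, b - SM[ &, {homo shift_integral : u v / u <= v}}.
Proof.
move=> u v uS vS uv; apply: le_Rintegral => //.
- exact/continuous_itv_integrable/shift_diff_continuous.
- exact/continuous_itv_integrable/shift_diff_continuous.
move=> w /=; rewrite in_itv /= => /andP[? ?]; rewrite lerD2r.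
by move: uS vS; rewrite !in_itv /= => /andP[? ?] /andP[? ?]; apply: h_homo; lra.
Qed.

Lemma shift_integral_quotient_cvg :
  (fun e => shift_integral e / e) @ 0^' --> h SM - h Sm.
Proof.
apply: Rintegral_shift_quotient_cvg a_Sm Sm_SM SM_b _ => x.
by rewrite in_itv /=; exact: h_cont.
Qed.

Lemma optimal_offset_ratio_cvg {T : Type} (F : set_system T) {FF : Filter F}
    (delta s : T -> R) (L : R) :
  (\forall t \near F, (delta t \in `]a - Sm, b - SM[) /\ s t != 0) -> s @ F --> 0 ->
  (fun t => shift_integral (delta t) / s t) @ F --> L ->
  (fun t => delta t / s t) @ F --> L / (h SM - h Sm).
Proof.
move=> delta_s s0 integralL; have c0 : 0 < h SM - h Sm by rewrite subr_gt0.
have integral0 : (shift_integral \o delta) @ F --> 0.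
  rewrite -(mulr0 L); apply: cvg_trans (cvgM integralL s0); apply: near_eq_cvg.
  near=> t; have [_ st0] : (delta t \in `]a - Sm, b - SM[) /\ s t != 0 by near: t.
  by rewrite /= divfK.
have c_neq0 := lt0r_neq0 c0.
apply: (cvg_ratio_of_quotient shift_integral0 c_neq0 shift_integral_quotient_cvg _ integralL).
apply: (monotone_cvg0 _ _ shift_integral_homo c0 shift_integral_quotient_cvg _ integral0).
- by rewrite subr_lt0.
- by rewrite subr_gt0.
- by apply: filterS delta_s => t [].
Unshelve. all: by end_near.
Qed.

Lemma evaluated_in_offset wu tau d delta :
  evaluated_in a b Sm SM wu tau d delta -> delta \in `]a - Sm, b - SM[.
Proof.
have [Sm_S SM_S] : Sm <= Sm <= SM /\ Sm <= SM <= SM by rewrite !lexx ltW.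
move=> ev; have [/andP[aSm _] _] := ev Sm Sm_S; have [/andP[_ SMb] _] := ev SM SM_S.
by rewrite in_itv /=; apply/andP; split; lra.
Qed.

Lemma evaluated_in_bias wu tau d delta w : evaluated_in a b Sm SM wu tau d delta ->
  Sm <= w <= SM -> wu - tau / 2 <= w <= wu + tau / 2 -> a < w + d < b.
Proof. by move=> ev wS wSu; have [_] := ev w wS; rewrite /zobs /Iu wSu mul1r. Qed.

Lemma bias_diff_continuous wu tau d delta :
  Sm <= wu - tau / 2 -> wu + tau / 2 <= SM -> evaluated_in a b Sm SM wu tau d delta ->
  {in `[wu - tau / 2, wu + tau / 2], continuous (fun w => h (w + d) - h w)}.
Proof.
move: a_Sm SM_b => ? ? Sm_Su Su_SM ev w; rewrite in_itv /= => wSu.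
have wS : Sm <= w <= SM by move: wSu => /andP[? ?]; apply/andP; split; lra.
have wd := evaluated_in_bias ev wS wSu.
apply: continuousB; first exact/continuous_shift/h_cont.
by apply: h_cont; move: wS => /andP[? ?]; apply/andP; split; lra.
Qed.

Lemma offset_opt_shift_integral wu tau d delta :
  Sm <= wu - tau / 2 -> wu + tau / 2 <= SM ->
  evaluated_in a b Sm SM wu tau d delta -> offset_opt h Sm SM wu tau d delta ->
  shift_integral delta = \int[mu]_(w in `[wu - tau / 2, wu + tau / 2]) (h (w + d) - h w).
Proof.
move=> Sm_Su Su_SM ev opt; pose k w := h (w + d) - h w.
have Su_S : `[wu - tau / 2, wu + tau / 2] `<=` `[Sm, SM].
  by move=> w /=; rewrite !in_itv /= => /andP[? ?]; apply/andP; split; lra.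
have int_k : mu.-integrable `[Sm, SM] (EFin \o k \_ `[wu - tau / 2, wu + tau / 2]).
  rewrite -restrict_EFin; apply/integrable_restrict => //; rewrite setIidr //.
  exact/continuous_itv_integrable/(bias_diff_continuous Sm_Su Su_SM ev).
have int_g := continuous_itv_integrable (shift_diff_continuous (evaluated_in_offset ev)).
have : \int[mu]_(w in `[Sm, SM])
    ((h (w + delta) - h w) - (k \_ `[wu - tau / 2, wu + tau / 2]) w) = 0.
  rewrite -[RHS]/(fine 0%E) -opt; congr fine; apply: eq_integral => w _; congr EFin.
  rewrite /zobs /Iu patchE mem_setE in_itv /=.
  by case: ifP => _; rewrite /k ?mul1r ?mul0r ?addr0 ?subr0 //; ring.
rewrite (RintegralB _ int_g int_k) // -/(shift_integral delta) => /subr0_eq ->.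
by rewrite -Rintegral_mkcondr setIidr.
Qed.

Lemma optimal_offset_mean_value wu tau d delta : 0 < tau ->
  Sm <= wu - tau / 2 -> wu + tau / 2 <= SM ->
  evaluated_in a b Sm SM wu tau d delta -> offset_opt h Sm SM wu tau d delta ->
  exists2 xi, wu - tau / 2 < xi < wu + tau / 2 &
    a < xi + d < b /\ shift_integral delta = tau * (h (xi + d) - h xi).
Proof.
move=> tau0 Sm_Su Su_SM ev opt.
have Su : wu - tau / 2 < wu + tau / 2 by lra.
rewrite (offset_opt_shift_integral Sm_Su Su_SM ev opt).
have [xi xiSu ->] := Rintegral_mean_value Su (bias_diff_continuous Sm_Su Su_SM ev).
move: xiSu; rewrite in_itv /= => xiSu; exists xi => //; split; last by congr (_ * _); lra.
by apply: (evaluated_in_bias ev); move: xiSu => /andP[? ?]; apply/andP; split; lra.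
Qed.

Section interior_point.
Variable wu : R.
Hypothesis wu_in : Sm < wu < SM.

Lemma bust_limit d (delta : R -> R) :
  (\forall tau \near 0^'+, evaluated_in a b Sm SM wu tau d (delta tau) /\
     offset_opt h Sm SM wu tau d (delta tau)) ->
  (fun tau => delta tau / tau) @ 0^'+ --> (h (wu + d) - h wu) / (h SM - h Sm).
Proof.
move: wu_in => /andP[Sm_wu wu_SM] opt.
have near_mv : \forall tau \near 0^'+, [/\ 0 < tau, delta tau \in `]a - Sm, b - SM[ &
    exists2 xi, `|xi - wu| <= tau & shift_integral (delta tau) / tau = h (xi + d) - h xi].
  near=> tau; have tau0 : 0 < tau by near: tau; exact: nbhs_right_gt.
  have tau_Sm : tau < wu - Sm by near: tau; apply: nbhs_right_lt; rewrite subr_gt0.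
  have tau_SM : tau < SM - wu by near: tau; apply: nbhs_right_lt; rewrite subr_gt0.
  have [ev op] : evaluated_in a b Sm SM wu tau d (delta tau) /\
    offset_opt h Sm SM wu tau d (delta tau) by near: tau.
  split => //; first exact: evaluated_in_offset ev.
  have Sm_Su : Sm <= wu - tau / 2 by lra.
  have Su_SM : wu + tau / 2 <= SM by lra.
  have [xi /andP[? ?] [_ ->]] := optimal_offset_mean_value tau0 Sm_Su Su_SM ev op.
  exists xi; first by rewrite ler_norml; apply/andP; split; lra.
  by rewrite mulrC mulKf // gt_eqF.
have [tau [tau0 [ev _]]] : exists tau, 0 < tau /\
    (evaluated_in a b Sm SM wu tau d (delta tau) /\ offset_opt h Sm SM wu tau d (delta tau)).
  apply: (filter_ex (F := 0^'+)); near=> tau.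
  by split; near: tau; [exact: nbhs_right_gt | exact: opt].
have wud : a < wu + d < b.
  by apply: (evaluated_in_bias ev); apply/andP; split; lra.
apply: (optimal_offset_ratio_cvg (s := fun tau => tau)).
- by apply: filterS near_mv => t [t0 ? _]; split => //; exact: lt0r_neq0.
- exact: cvg_at_right_filter cvg_id.
apply: (cvg_mean_value_point (g := fun x => h (x + d) - h x)).
- apply: continuousB; first exact/continuous_shift/h_cont.
  by apply: h_cont; rewrite (lt_trans a_Sm Sm_wu) (lt_trans wu_SM SM_b).
- exact: cvg_at_right_filter cvg_id.
- by apply: filterS near_mv => t [].
Unshelve. all: by end_near.
Qed.

Lemma optimal_offset_derive_point tau d delta :
  0 < tau -> tau < wu - Sm -> tau < SM - wu -> d != 0 ->
  evaluated_in a b Sm SM wu tau d delta -> offset_opt h Sm SM wu tau d delta ->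
  exists2 c, `|c - wu| <= tau + `|d| & shift_integral delta / (d * tau) = derive1 h c.
Proof.
move=> tau0 tau_Sm tau_SM d0 ev op.
have Sm_Su : Sm <= wu - tau / 2 by lra.
have Su_SM : wu + tau / 2 <= SM by lra.
have [xi /andP[? ?] [xid ->]] := optimal_offset_mean_value tau0 Sm_Su Su_SM ev op.
have h_derivable : {in `]a, b[, forall y, derivable h y 1}.
  by move=> y; rewrite in_itv /= => /h_C1[].
have xi_ab : xi \in `]a, b[.
  by rewrite in_itv /= (lt_trans a_Sm) ?(lt_trans _ SM_b) //; lra.
have xid_ab : xi + d \in `]a, b[ by rewrite in_itv.
have [c + ->] := mean_value_derive1 h_derivable xi_ab xid_ab.
rewrite ler_norml => /andP[? ?]; exists c.
  by rewrite ler_norml; apply/andP; split; lra.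
by field; rewrite d0 gt_eqF.
Qed.

Lemma near_optimal_offset_derive_point (delta : R -> R -> R) :
  (\forall tau \near 0^'+ & d \near 0^', evaluated_in a b Sm SM wu tau d (delta tau d) /\
     offset_opt h Sm SM wu tau d (delta tau d)) ->
  \forall p \near filter_prod 0^'+ 0^', [/\ p.2 * p.1 != 0,
    delta p.1 p.2 \in `]a - Sm, b - SM[ & exists2 c, `|c - wu| <= p.1 + `|p.2| &
      shift_integral (delta p.1 p.2) / (p.2 * p.1) = derive1 h c].
Proof.
move: wu_in => /andP[Sm_wu wu_SM] opt.
have tau_small : \forall tau \near 0^'+ & _ \near (0 : R)^',
    [/\ 0 < tau, tau < wu - Sm & tau < SM - wu].
  have : \forall tau \near 0^'+, [/\ 0 < tau, tau < wu - Sm & tau < SM - wu].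
    near=> tau; split; near: tau; first exact: nbhs_right_gt.
      by apply: nbhs_right_lt; rewrite subr_gt0.
    by apply: nbhs_right_lt; rewrite subr_gt0.
  exact: filter_prod1.
have d_neq0 : \forall _ \near (0 : R)^'+ & d \near (0 : R)^', d != 0.
  have : \forall d \near (0 : R)^', d != 0 by exact: nbhs_dnbhs_neq.
  exact: filter_prod2.
near=> p.
have [tau0 tau_Sm tau_SM] : [/\ 0 < p.1, p.1 < wu - Sm & p.1 < SM - wu] by near: p.
have d0 : p.2 != 0 by near: p.
have [ev op] : evaluated_in a b Sm SM wu p.1 p.2 (delta p.1 p.2) /\
  offset_opt h Sm SM wu p.1 p.2 (delta p.1 p.2) by near: p.
split; first by rewrite mulf_neq0 // gt_eqF.
  exact: evaluated_in_offset ev.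
exact: optimal_offset_derive_point tau0 tau_Sm tau_SM d0 ev op.
Unshelve. all: by end_near.
Qed.

Lemma blust_limit (delta : R -> R -> R) :
  (\forall tau \near 0^'+ & d \near 0^', evaluated_in a b Sm SM wu tau d (delta tau d) /\
     offset_opt h Sm SM wu tau d (delta tau d)) ->
  (fun p : R * R => delta p.1 p.2 / (p.2 * p.1)) @ filter_prod 0^'+ 0^' -->
    derive1 h wu / (h SM - h Sm).
Proof.
move=> /near_optimal_offset_derive_point near_mv; move: wu_in => /andP[Sm_wu wu_SM].
have tau0 : (fun p : R * R => p.1) @ filter_prod 0^'+ 0^' --> 0.
  by apply: cvg_trans; [exact: cvg_fst | exact: cvg_within].
have d0 : (fun p : R * R => p.2) @ filter_prod 0^'+ 0^' --> 0.
  by apply: cvg_trans; [exact: cvg_snd | exact: cvg_within].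
have wu_ab : a < wu < b by rewrite (lt_trans a_Sm Sm_wu) (lt_trans wu_SM SM_b).
apply: (optimal_offset_ratio_cvg (s := fun p => p.2 * p.1)).
- by apply: filterS near_mv => p [? ? _]; split.
- by rewrite -[X in _ --> X](mulr0 0); exact: cvgM.
apply: (cvg_mean_value_point (rho := fun p => p.1 + `|p.2|)).
- by have [_] := h_C1 wu_ab.
- rewrite -[X in _ --> X](addr0 0) -[X in _ + X](normr0 R).
  exact: cvgD tau0 (cvg_norm d0).
- by apply: filterS near_mv => p [].
Qed.

End interior_point.

End bias_underspecification.

Theorem theorem1 (R : realType) (a b Sm SM wu : R) (h : R -> R) :
  (* h is C^1 and non-decreasing on the open interval ]a, b[ *)
  (forall x, a < x < b -> derivable h x 1 /\ {for x, continuous (derive1 h)}) ->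
  (forall x y, a < x -> x <= y -> y < b -> h x <= h y) ->
  (* S = [Sm, SM] with Sm < SM, contained in ]a, b[ *)
  Sm < SM -> a < Sm -> SM < b ->
  h Sm < h SM ->
  (* wu in the interior of S *)
  Sm < wu < SM ->
  (* BUST: for a fixed bias d, delta(tau) optimal for all small tau > 0 *)
  (forall (d : R) (delta : R -> R),
     (\forall tau \near 0^'+,
        evaluated_in a b Sm SM wu tau d (delta tau) /\
        offset_opt h Sm SM wu tau d (delta tau)) ->
     (fun tau => delta tau / tau) @ 0^'+ -->
       (h (wu + d) - h wu) / (h SM - h Sm))
  /\
  (* BLUST: delta(tau, d) optimal for all small tau > 0 and small d <> 0 *)
  (forall delta : R -> R -> R,
     (\forall tau \near 0^'+ & d \near 0^',
        evaluated_in a b Sm SM wu tau d (delta tau d) /\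
        offset_opt h Sm SM wu tau d (delta tau d)) ->
     (fun p : R * R => delta p.1 p.2 / (p.2 * p.1)) @ filter_prod 0^'+ 0^' -->
       derive1 h wu / (h SM - h Sm)).
Proof.
move=> h_C1 h_homo Sm_SM a_Sm SM_b h_Sm_SM wu_in; split.
- by move=> d delta; apply: bust_limit.
- by move=> delta; apply: blust_limit.
Qed.
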